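(* Let $R$ be a ranking profile over $m$ candidates and let $\rhd$ be a ranking that is rank-priceable for $R$. Then $\rhd$ satisfies unanimous proportional justified representation (uPJR) for $R$, i.e., $u(\succ,\rhd)\geq\lfloor R(\succ)\binom{m}{2}\rfloor$ for all $\succ\in\mathcal{R}$.
   Context: Let $C$ be a set of $m$ candidates. A ranking is a strict linear order over $C$; $\mathcal{R}$ denotes the set of all rankings over $C$. A ranking profile is a function $R:\mathcal{R}\to[0,1]$ with $\sum_{\succ\in\mathcal{R}}R(\succ)=1$. For rankings $\succ,\rhd$, $u(\succ,\rhd)=|\{(x,y)\in C^2: x\succ y \text{ and } x\rhd y\}|$, and for $x\in X\subseteq C$, $u(\succ,x,X)=|\{y\in X\setminus\{x\}: x\succ y\}|$. A ranking $\rhd=x_1,\dots,x_m$ (i.e., $x_1\rhd x_2\rhd\dots\rhd x_m$) is rank-priceable for $R$ if there is $\pi:\mathcal{R}\times C\to\mathbb{R}$ such that (1) $0\leq\pi(\succ,x_i)\leq u(\succ,x_i,\{x_i,\dots,x_m\})$ for all $\succ\in\mathcal{R}$ and all $i$; (2) $\sum_{i=1}^m\pi(\succ,x_i)\leq\binom{m}{2}R(\succ)$ for all $\succ\in\mathcal{R}$; (3) $\sum_{\succ\in\mathcal{R}}\pi(\succ,x_i)\leq m-i$ for all $i\in\{1,\dots,m\}$; (4) $\sum_{\succ\in\mathcal{R}}\sum_{i=1}^m\pi(\succ,x_i)>\binom{m}{2}-1$. *)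

(* Candidates are 'I_m; a ranking is a permutation
   s : {perm 'I_m} listing candidates by position: s i is the candidate
   ranked at position i (0 = top). *)
From HB Require Import structures.
From mathcomp Require Import all_boot all_order all_algebra all_fingroup.
From mathcomp Require Import reals.
Set Implicit Arguments. Unset Strict Implicit. Unset Printing Implicit Defensive.
Import Order.TTheory GRing.Theory Num.Theory.

Definition ranking (m : nat) := {perm 'I_m}.

Definition prefers (m : nat) (s : ranking m) (x y : 'I_m) : bool :=
  (nat_of_ord ((s^-1)%g x) < nat_of_ord ((s^-1)%g y))%N.

Definition u_pair (m : nat) (s t : ranking m) : nat :=
  #|[set p : 'I_m * 'I_m | prefers s p.1 p.2 && prefers t p.1 p.2]|.

Definition u_set (m : nat) (s : ranking m) (x : 'I_m) (X : {set 'I_m}) : nat :=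
  #|[set y in X | (y != x) && prefers s x y]|.

Definition suffix_set (m : nat) (t : ranking m) (i : 'I_m) : {set 'I_m} :=
  [set t j | j : 'I_m & (i <= j)%N].

Definition is_profile (R : realType) (m : nat) (P : ranking m -> R) : Prop :=
  (forall s, 0 <= P s)%R /\ (\sum_(s : ranking m) P s = 1)%R.

Local Open Scope ring_scope.

(* rank-priceability; position i (0-indexed) corresponds to x_{i+1} *)
Definition rank_priceable (R : realType) (m : nat) (P : ranking m -> R)
    (t : ranking m) : Prop :=
  exists pi : ranking m -> 'I_m -> R,
    [/\ (forall s (i : 'I_m), 0 <= pi s (t i) /\
            pi s (t i) <= (u_set s (t i) (suffix_set t i))%:R),
        (forall s, \sum_(i < m) pi s (t i) <= ('C(m, 2))%:R * P s),
        (forall i : 'I_m, \sum_(s : ranking m) pi s (t i) <= (m - i.+1)%:R) &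
        \sum_(s : ranking m) \sum_(i < m) pi s (t i) > ('C(m, 2))%:R - 1].

Definition uPJR (R : realType) (m : nat) (P : ranking m -> R) (t : ranking m) : Prop :=
  forall s : ranking m, Num.floor (P s * ('C(m, 2))%:R) <= (u_pair s t)%:Z.

(* Each term of the rank-pricing is bounded by u(s, x_i, {x_i, ..., x_m}), and
   these counts sum exactly to u(s, t): the candidates of the suffix other than
   x_i are precisely those ranked below x_i in t.  So a ranking s pays at most
   u(s, t) in total.  If floor(R(s) C(m,2)) exceeded u(s, t), s would pay at
   least 1 less than its budget C(m,2) R(s); since no ranking exceeds its
   budget and the budgets sum to C(m,2), the total payment would be at most
   C(m,2) - 1, contradicting condition (4). *)
From mathcomp Require Import all_boot all_order all_algebra all_fingroup.
From mathcomp Require Import reals.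
Set Implicit Arguments. Unset Strict Implicit. Unset Printing Implicit Defensive.
Import Order.TTheory GRing.Theory Num.Theory.

Section Counting.

Variables (m : nat) (s t : ranking m).

Lemma prefers_permE (i j : 'I_m) : prefers t (t i) (t j) = (i < j)%N.
Proof. by rewrite /prefers !permK. Qed.

Lemma suffix_set_neqE (i : 'I_m) (y : 'I_m) :
  (y \in suffix_set t i) && (y != t i) = prefers t (t i) y.
Proof.
rewrite -[y](permKV t) prefers_permE (inj_eq perm_inj) mem_imset ?inE;
  last exact: perm_inj.
by rewrite ltn_neqAle andbC eq_sym.
Qed.

Lemma u_set_suffix_set (i : 'I_m) :
  u_set s (t i) (suffix_set t i) =
  #|[set y | prefers s (t i) y && prefers t (t i) y]|.
Proof.
apply: eq_card => y; rewrite !inE -suffix_set_neqE.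
by case: (y \in _); case: (y != _); case: (prefers s _ _).
Qed.

Lemma u_pair_sum_below :
  u_pair s t = (\sum_x #|[set y | prefers s x y && prefers t x y]|)%N.
Proof.
rewrite /u_pair -sum1_card.
under [RHS]eq_bigr => x _ do rewrite -sum1_card.
by rewrite pair_big_dep; apply: eq_bigl => -[x y]; rewrite !inE.
Qed.

Lemma u_pair_sum_suffix :
  u_pair s t = (\sum_(i < m) u_set s (t i) (suffix_set t i))%N.
Proof.
rewrite u_pair_sum_below (reindex_inj (@perm_inj _ t)) /=.
by apply: eq_bigr => i _; rewrite u_set_suffix_set.
Qed.

End Counting.

Local Open Scope ring_scope.

Lemma sum_le_budget_sub1 (R : numDomainType) (I : finType) (w c : I -> R)
    (C : R) (i0 : I) :
  \sum_i w i = 1 -> (forall i, c i <= C * w i) -> c i0 <= C * w i0 - 1 ->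
  \sum_i c i <= C - 1.
Proof.
move=> w1 c_le ci0_le; rewrite (bigD1 i0) //=.
apply: le_trans (lerD ci0_le (ler_sum _ (fun i _ => c_le i))) _.
by rewrite -mulr_sumr addrAC -mulrDr -(bigD1 i0 (P := xpredT)) //= w1 mulr1.
Qed.

Theorem mainTheorem3 (R : realType) (m : nat) (P : ranking m -> R) (t : ranking m) :
  is_profile P -> rank_priceable P t -> uPJR P t.
Proof.
move=> [_ P1] [pi [pi_bound pi_budget _ pi_total]] s.
set C : R := ('C(m, 2))%:R.
have paid_le_u_pair s' : \sum_(i < m) pi s' (t i) <= (u_pair s' t)%:R.
  rewrite u_pair_sum_suffix natr_sum.
  by apply: ler_sum => i _; case: (pi_bound s' i).
rewrite -ltzD1 floor_lt_int ltNge; apply/negP => floor_big.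
have pi_s_le : \sum_(i < m) pi s (t i) <= C * P s - 1.
  rewrite lerBrDr mulrC; apply: le_trans floor_big.
  by rewrite intrD lerD2r paid_le_u_pair.
have := sum_le_budget_sub1 P1 pi_budget pi_s_le.
by rewrite leNgt pi_total.
Qed.
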